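(* Let $\mathcal{H}=(C,F,D,G)$ be a hybrid system on $\mathcal{X}$, let $p$ be an atomic proposition and $K:=\{x\in\mathcal{X}:p(x)=1\}$. Then $(\phi,(t,j))\models\bigcirc p$ for every maximal solution $\phi$ to $\mathcal{H}$ and every $(t,j)\in\operatorname{dom}\phi$ if and only if all of the following hold: (a) each nontrivial solution $\phi$ to $\mathcal{H}$ satisfies $\phi(0,0)\in D$; (b) no flow of $\mathcal{H}$ is possible from any $x\in C$ (i.e., there is no solution $\phi$ with $\phi(0,0)=x\in C$ and $[0,\varepsilon)\times\{0\}\subset\operatorname{dom}\phi$ for some $\varepsilon>0$); (c) $G(D)\subset K\cap D$; (d) $\overline C\subset D$.
   Context: Hybrid systems. A hybrid system $\mathcal{H}=(C,F,D,G)$ on a state space $\mathcal{X}\subset\mathbb{R}^n$ is given by a flow set $C\subset\mathcal{X}$, a set-valued flow map $F:\mathcal{X}\rightrightarrows\mathcal{X}$, a jump set $D\subset\mathcal{X}$ and a set-valued jump map $G:\mathcal{X}\rightrightarrows\mathcal{X}$, and represents $\dot x\in F(x)$ for $x\in C$, $x^+\in G(x)$ for $x\in D$. Standing assumptions: $C\subset\operatorname{dom}F$, $D\subset\operatorname{dom}G$, $\overline{C}\cup D\cup G(D)\subset\mathcal{X}$ ($\overline C$ is the closure of $C$). A set $E\subset\mathbb{R}_{\ge0}\times\mathbb{N}$ is a hybrid time domain if for every $(T,J)\in E$ there are $0=t_0\le t_1\le\dots\le t_{J+1}$ with $E\cap([0,T]\times\{0,\dots,J\})=\bigcup_{j=0}^J([t_j,t_{j+1}]\times\{j\})$.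 A hybrid arc is a map $\phi:\operatorname{dom}\phi\to\mathbb{R}^n$ on a hybrid time domain such that for each $j$, $t\mapsto\phi(t,j)$ is locally absolutely continuous on $I^j=\{t:(t,j)\in\operatorname{dom}\phi\}$. A hybrid arc $\phi$ is a solution to $\mathcal{H}$ if (i) $\phi(0,0)\in\overline C\cup D$; (ii) for each $j$ such that $I^j$ has nonempty interior, $\phi(t,j)\in C$ for all $t\in\operatorname{int}I^j$ and $\dot\phi(t,j)\in F(\phi(t,j))$ for almost all $t\in I^j$; (iii) for each $(t,j)\in\operatorname{dom}\phi$ with $(t,j+1)\in\operatorname{dom}\phi$, $\phi(t,j)\in D$ and $\phi(t,j+1)\in G(\phi(t,j))$. A solution is nontrivial if its domain contains at least two points; it is maximal if it cannot be extended to a solution with strictly larger domain. Temporal logic. An atomic proposition is a function $p:\mathcal{X}\to\{0,1\}$; write $\phi(t,j)\Vdash p$ if $p(\phi(t,j))=1$. $(\phi,(t,j))\models p$ iff $\phi(t,j)\Vdash p$; $(\phi,(t,j))\models\bigcirc p$ iff $(t,j+1)\in\operatorname{dom}\phi$ and $(\phi,(t,j+1))\models p$. The set $K$ is assumed nonempty. *)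

From Stdlib Require Import Reals Lra.
From Stdlib Require Fin.
Open Scope R_scope.

Definition Vec (n : nat) : Type := Fin.t n -> R.

(** Closure in R^n (sup-norm balls; same topology as the Euclidean one). *)
Definition closure {n : nat} (A : Vec n -> Prop) (x : Vec n) : Prop :=
  forall eps : R, 0 < eps ->
    exists y : Vec n, A y /\ forall i : Fin.t n, Rabs (x i - y i) < eps.

(** A hybrid system (C, F, D, G) on a state space X ⊂ R^n; set-valued maps
    are given by their graphs. *)
Record HybridSystem (n : nat) : Type := {
  hs_X : Vec n -> Prop;
  hs_C : Vec n -> Prop;
  hs_F : Vec n -> Vec n -> Prop;
  hs_D : Vec n -> Prop;
  hs_G : Vec n -> Vec n -> Prop
}.
Arguments hs_X {n}. Arguments hs_C {n}. Arguments hs_F {n}.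
Arguments hs_D {n}. Arguments hs_G {n}.

Definition standing_assumptions {n : nat} (H : HybridSystem n) : Prop :=
  (forall x v, hs_F H x v -> hs_X H x /\ hs_X H v) /\
  (forall x y, hs_G H x y -> hs_X H x /\ hs_X H y) /\
  (forall x, hs_C H x -> exists v, hs_F H x v) /\
  (forall x, hs_D H x -> exists y, hs_G H x y) /\
  (forall x, closure (hs_C H) x -> hs_X H x) /\
  (forall x, hs_D H x -> hs_X H x) /\
  (forall x y, hs_D H x -> hs_G H x y -> hs_X H y).

Definition hybrid_time_domain (E : R -> nat -> Prop) : Prop :=
  (forall t j, E t j -> 0 <= t) /\
  forall (T : R) (J : nat), E T J ->
    exists tt : nat -> R,
      tt 0%nat = 0 /\
      (forall k, (k <= J)%nat -> tt k <= tt (S k)) /\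
      forall (s : R) (k : nat),
        (E s k /\ 0 <= s <= T /\ (k <= J)%nat) <->
        ((k <= J)%nat /\ tt k <= s <= tt (S k)).

Fixpoint fsum (f : nat -> R) (m : nat) : R :=
  match m with
  | O => 0
  | S m' => fsum f m' + f m'
  end.

Definition abs_continuous_on (f : R -> R) (a b : R) : Prop :=
  forall eps : R, 0 < eps -> exists delta : R, 0 < delta /\
    forall (m : nat) (aa bb : nat -> R),
      (forall k, (k < m)%nat -> a <= aa k /\ aa k <= bb k /\ bb k <= b) ->
      (forall k l, (k < l)%nat -> (l < m)%nat -> bb k <= aa l) ->
      fsum (fun k => bb k - aa k) m < delta ->
      fsum (fun k => Rabs (f (bb k) - f (aa k))) m < eps.

Definition loc_abs_continuous_on {n : nat} (f : R -> Vec n) (I : R -> Prop)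
  : Prop :=
  forall a b : R, a <= b -> (forall s, a <= s <= b -> I s) ->
    forall i : Fin.t n, abs_continuous_on (fun s => f s i) a b.

Definition hybrid_arc {n : nat} (E : R -> nat -> Prop) (phi : R -> nat -> Vec n)
  : Prop :=
  hybrid_time_domain E /\
  forall j : nat, loc_abs_continuous_on (fun t => phi t j) (fun t => E t j).

Definition interior (I : R -> Prop) (t : R) : Prop :=
  exists eps : R, 0 < eps /\ forall s, Rabs (s - t) < eps -> I s.

Definition null_set (N : R -> Prop) : Prop :=
  forall eps : R, 0 < eps ->
    exists aa bb : nat -> R,
      (forall k, aa k <= bb k) /\
      (forall x, N x -> exists k, aa k <= x <= bb k) /\
      (forall m, fsum (fun k => bb k - aa k) m < eps).

Definition is_solution {n : nat} (H : HybridSystem n)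
  (E : R -> nat -> Prop) (phi : R -> nat -> Vec n) : Prop :=
  hybrid_arc E phi /\
  E 0 0%nat /\
  (closure (hs_C H) (phi 0 0%nat) \/ hs_D H (phi 0 0%nat)) /\
  (forall j : nat,
     (exists t, interior (fun s => E s j) t) ->
     (forall t, interior (fun s => E s j) t -> hs_C H (phi t j)) /\
     exists N : R -> Prop, null_set N /\
       forall t, E t j -> ~ N t ->
         interior (fun s => E s j) t /\
         exists v : Vec n, hs_F H (phi t j) v /\
           forall i : Fin.t n, derivable_pt_lim (fun s => phi s j i) t (v i)) /\
  (forall t j, E t j -> E t (S j) ->
     hs_D H (phi t j) /\ hs_G H (phi t j) (phi t (S j))).

Definition nontrivial (E : R -> nat -> Prop) : Prop :=
  exists t1 j1 t2 j2, E t1 j1 /\ E t2 j2 /\ (t1 <> t2 \/ j1 <> j2).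

Definition maximal_solution {n : nat} (H : HybridSystem n)
  (E : R -> nat -> Prop) (phi : R -> nat -> Vec n) : Prop :=
  is_solution H E phi /\
  ~ exists (E' : R -> nat -> Prop) (phi' : R -> nat -> Vec n),
      is_solution H E' phi' /\
      (forall t j, E t j -> E' t j) /\
      (exists t j, E' t j /\ ~ E t j) /\
      (forall t j, E t j -> phi' t j = phi t j).

Definition sat_next {n : nat} (p : Vec n -> bool)
  (E : R -> nat -> Prop) (phi : R -> nat -> Vec n) (t : R) (j : nat) : Prop :=
  E t (S j) /\ p (phi t (S j)) = true.

(* Every solution extends to a maximal one, by Zorn's lemma: the union of a chain
   of solutions is again a solution, its flow condition failing only on a countable
   union of null sets.  So if every maximal solution satisfies ○p everywhere, every
   solution jumps from each of its points: its points lie in D, which gives (a),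
   and (c), (d) via two-point and one-point solutions; and it cannot flow, since a
   hybrid time domain cannot contain (0,1), (ε/2,0) and (ε/2,1).
   Conversely, by (b) no time domain has interior points (a piece of flow could be
   restarted as a solution from a point of C), so solutions only jump at time 0;
   by (c) and (d) all their points lie in D ⊂ dom G, so a maximal solution keeps
   jumping, and by (c) it lands in K each time. *)

From Stdlib Require Import Reals Lra Lia Classical ClassicalEpsilon.
From Stdlib Require Fin Cantor.
From mathcomp Require boolp classical_sets.
Open Scope R_scope.

Lemma fsum_ext f g m :
  (forall k, (k < m)%nat -> f k = g k) -> fsum f m = fsum g m.
Proof.
induction m as [|m IH]; simpl; intros Hfg; auto.
rewrite IH, Hfg by (intros; apply Hfg || idtac; lia). reflexivity.
Qed.

Lemma fsum_le f g m : (forall k, f k <= g k) -> fsum f m <= fsum g m.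
Proof. induction m; simpl; intros Hfg; [lra|]. pose proof (Hfg m). specialize (IHm Hfg). lra. Qed.

Lemma fsum_const0 m : fsum (fun _ => 0) m = 0.
Proof. induction m; simpl; lra. Qed.

Lemma fsum_succ_l f m : fsum f (S m) = f 0%nat + fsum (fun k => f (S k)) m.
Proof. induction m; simpl in *; [lra|]. rewrite IHm. lra. Qed.

Lemma fsum_add f a b :
  fsum f (a + b) = fsum f a + fsum (fun k => f (a + k)%nat) b.
Proof.
induction b; simpl; [rewrite Nat.add_0_r; lra|].
rewrite Nat.add_succ_r. simpl. rewrite IHb. lra.
Qed.

Lemma fsum_mul_block f B M :
  fsum f (M * B) = fsum (fun m => fsum (fun i => f (m * B + i)%nat) B) M.
Proof.
induction M; simpl; auto.
replace (B + M * B)%nat with (M * B + B)%nat by lia.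
rewrite fsum_add, IHM. reflexivity.
Qed.

Lemma fsum_remove f K k0 : (k0 < K)%nat ->
  fsum f K = f k0 + fsum (fun k => if (k <? k0)%nat then f k else f (S k)) (K - 1).
Proof.
induction K; intros Hk; [lia|].
change (fsum f (S K)) with (fsum f K + f K).
destruct (Nat.eq_dec k0 K) as [->|Hne].
- replace (S K - 1)%nat with K by lia.
  rewrite (fsum_ext (fun k => if (k <? K)%nat then f k else f (S k)) f K); [lra|].
  intros k Hk'. destruct (Nat.ltb_spec k K); [auto|lia].
- rewrite IHK by lia. destruct K as [|K]; [lia|].
  replace (S (S K) - 1)%nat with (S K) by lia. replace (S K - 1)%nat with K by lia.
  simpl. destruct (Nat.ltb_spec K k0); [lia|]. lra.
Qed.

Lemma fsum_inj_le (g : nat -> R) (B : nat) : (forall x, 0 <= g x) ->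
  forall (K : nat) (e : nat -> nat),
  (forall k, (k < K)%nat -> (e k < B)%nat) ->
  (forall k l, (k < K)%nat -> (l < K)%nat -> e k = e l -> k = l) ->
  fsum (fun k => g (e k)) K <= fsum g B.
Proof.
intros Hg. induction B as [|B IH]; intros K e Hb Hi.
- destruct K; [simpl; lra|]. specialize (Hb 0%nat ltac:(lia)). lia.
- destruct (classic (exists k0, (k0 < K)%nat /\ e k0 = B)) as [[k0 [Hk0 Hek]]|Hno].
  + rewrite (fsum_remove _ K k0 Hk0). simpl. rewrite Hek.
    set (e' := fun k => if (k <? k0)%nat then e k else e (S k)).
    rewrite (fsum_ext _ (fun k => g (e' k))).
    2:{ intros k _. unfold e'. destruct (k <? k0)%nat; auto. }
    enough (fsum (fun k => g (e' k)) (K - 1) <= fsum g B) by lra.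
    apply IH.
    * intros k Hk. unfold e'. destruct (Nat.ltb_spec k k0) as [Hlt|Hge].
      -- assert (e k < S B)%nat by (apply Hb; lia).
         assert (e k <> B) by (intro h; rewrite <- Hek in h; apply Hi in h; lia). lia.
      -- assert (e (S k) < S B)%nat by (apply Hb; lia).
         assert (e (S k) <> B) by (intro h; rewrite <- Hek in h; apply Hi in h; lia). lia.
    * intros k l Hk Hl. unfold e'.
      destruct (Nat.ltb_spec k k0), (Nat.ltb_spec l k0); intro h; apply Hi in h; lia.
  + simpl. enough (fsum (fun k => g (e k)) K <= fsum g B) by (specialize (Hg B); lra).
    apply IH; auto. intros k Hk. assert (e k < S B)%nat by auto.
    assert (e k <> B) by (intro h; apply Hno; exists k; auto). lia.
Qed.

Lemma nat_mul_add_inj a b c d M : (b < M)%nat -> (d < M)%nat ->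
  (a * M + b = c * M + d)%nat -> a = c /\ b = d.
Proof.
intros Hb Hd Heq. destruct (Nat.lt_trichotomy a c) as [h|[h|h]].
- assert (a * M + M <= c * M)%nat by nia. lia.
- subst; lia.
- assert (c * M + M <= a * M)%nat by nia. lia.
Qed.

Lemma mul_add_div_mod a b M : (b < M)%nat ->
  ((a * M + b) / M = a /\ (a * M + b) mod M = b)%nat.
Proof.
intros Hb. split.
- rewrite Nat.div_add_l, Nat.div_small by lia. lia.
- rewrite Nat.add_comm, Nat.Div0.mod_add, Nat.mod_small by lia. reflexivity.
Qed.

(* Enumerating [nat * nat] along the Cantor pairing, the first [M] pairs lie in
   the square [M * M]. *)
Lemma fsum_cantor_le (L : nat -> nat -> R) (b : nat -> R) :
  (forall m i, 0 <= L m i) -> (forall m q, fsum (L m) q <= b m) ->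
  forall M, fsum (fun k => L (fst (Cantor.of_nat k)) (snd (Cantor.of_nat k))) M
            <= fsum b M.
Proof.
intros HL Hb M.
set (g := fun q => L (q / M)%nat (q mod M)%nat).
set (e := fun k => (fst (Cantor.of_nat k) * M + snd (Cantor.of_nat k))%nat).
assert (Hbd : forall k, (k < M)%nat ->
  (fst (Cantor.of_nat k) < M)%nat /\ (snd (Cantor.of_nat k) < M)%nat).
{ intros k Hk. pose proof (Cantor.cancel_to_of k) as Hc.
  destruct (Cantor.of_nat k) as [x y]. simpl.
  pose proof (Cantor.to_nat_non_decreasing x y). lia. }
rewrite (fsum_ext _ (fun k => g (e k))).
2:{ intros k Hk. destruct (Hbd k Hk) as [_ h]. unfold g, e.
    destruct (mul_add_div_mod (fst (Cantor.of_nat k)) _ M h) as [-> ->]. reflexivity. }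
apply Rle_trans with (fsum g (M * M)).
- apply fsum_inj_le.
  + intros q. apply HL.
  + intros k Hk. destruct (Hbd k Hk). unfold e. nia.
  + intros k l Hk Hl Heq. destruct (Hbd k Hk), (Hbd l Hl).
    apply nat_mul_add_inj in Heq as [h1 h2]; auto.
    rewrite <- (Cantor.cancel_to_of k), <- (Cantor.cancel_to_of l).
    destruct (Cantor.of_nat k), (Cantor.of_nat l). simpl in *. subst. reflexivity.
- rewrite fsum_mul_block. apply fsum_le. intro m.
  rewrite (fsum_ext _ (L m)); [apply Hb|].
  intros i Hi. unfold g. destruct (mul_add_div_mod m i M Hi) as [-> ->]. reflexivity.
Qed.

Lemma fsum_geometric eps M :
  fsum (fun m => eps / 2 ^ (m + 2)) M = eps / 2 - eps / 2 ^ (M + 1).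
Proof.
induction M; simpl fsum; [simpl; field|].
rewrite IHM. replace (S M + 1)%nat with (S (M + 1)) by lia.
replace (M + 2)%nat with (S (M + 1)) by lia. simpl. field.
apply pow_nonzero. lra.
Qed.

Lemma null_set_subset (N N' : R -> Prop) :
  (forall x, N' x -> N x) -> null_set N -> null_set N'.
Proof.
intros Hs Hn eps He. destruct (Hn eps He) as [aa [bb [H1 [H2 H3]]]].
exists aa, bb. auto.
Qed.

Lemma null_set0 : null_set (fun _ => False).
Proof.
intros eps He. exists (fun _ => 0), (fun _ => 0). split; [|split].
- intros; lra.
- intros x [].
- intro m. rewrite (fsum_ext _ (fun _ => 0)), fsum_const0 by (intros; ring). exact He.
Qed.

Lemma null_set_add_point (N : R -> Prop) a :
  null_set N -> null_set (fun x => N x \/ x = a).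
Proof.
intros Hn eps He. destruct (Hn eps He) as [aa [bb [H1 [H2 H3]]]].
exists (fun k => match k with O => a | S k' => aa k' end),
       (fun k => match k with O => a | S k' => bb k' end).
split; [|split].
- intros [|k]; [lra|apply H1].
- intros x [Hx| ->].
  + destruct (H2 x Hx) as [k Hk]. exists (S k). exact Hk.
  + exists O. lra.
- intros [|m]; [simpl; lra|]. rewrite fsum_succ_l. specialize (H3 m). lra.
Qed.

Lemma null_set_shift (N : R -> Prop) c : null_set N -> null_set (fun s => N (c + s)).
Proof.
intros Hn eps He. destruct (Hn eps He) as [aa [bb [H1 [H2 H3]]]].
exists (fun k => aa k - c), (fun k => bb k - c). split; [|split].
- intro k; specialize (H1 k); lra.
- intros x Hx. destruct (H2 _ Hx) as [k Hk]. exists k; lra.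
- intro m. rewrite (fsum_ext _ (fun k => bb k - aa k)) by (intros; lra). apply H3.
Qed.

(* The [m]-th set is covered with total length [eps / 2^(m+2)]; the covers are
   interleaved along the Cantor pairing. *)
Lemma null_set_countable_union (N : nat -> R -> Prop) :
  (forall m, null_set (N m)) -> null_set (fun x => exists m, N m x).
Proof.
intros Hn eps He.
assert (Hex : forall m, exists ab : (nat -> R) * (nat -> R),
  (forall k, fst ab k <= snd ab k) /\
  (forall x, N m x -> exists k, fst ab k <= x <= snd ab k) /\
  (forall q, fsum (fun k => snd ab k - fst ab k) q < eps / 2 ^ (m + 2))).
{ intro m. assert (Hpos : 0 < eps / 2 ^ (m + 2)) by (apply Rdiv_lt_0_compat; [lra|apply pow_lt; lra]).
  destruct (Hn m _ Hpos) as [aa [bb Hab]]. exists (aa, bb). exact Hab. }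
destruct (choice _ Hex) as [cover Hcover].
set (A := fun k => fst (cover (fst (Cantor.of_nat k))) (snd (Cantor.of_nat k))).
set (B := fun k => snd (cover (fst (Cantor.of_nat k))) (snd (Cantor.of_nat k))).
exists A, B. split; [|split].
- intro k. apply Hcover.
- intros x [m Hm]. destruct (proj1 (proj2 (Hcover m)) x Hm) as [i Hi].
  exists (Cantor.to_nat (m, i)). unfold A, B. rewrite Cantor.cancel_of_to. exact Hi.
- intro M.
  assert (Hsum := fsum_cantor_le (fun m i => snd (cover m) i - fst (cover m) i)
                    (fun m => eps / 2 ^ (m + 2))).
  assert (Hsum_M : fsum (fun k => B k - A k) M <= eps / 2 - eps / 2 ^ (M + 1)).
  { rewrite <- fsum_geometric. apply Hsum.
    - intros m i. pose proof (proj1 (Hcover m) i). lra.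
    - intros m q. left. apply Hcover. }
  assert (0 < eps / 2 ^ (M + 1)) by (apply Rdiv_lt_0_compat; [lra|apply pow_lt; lra]).
  lra.
Qed.

Definition time_domain_partition (E : R -> nat -> Prop) T J (tt : nat -> R) : Prop :=
  tt 0%nat = 0 /\ (forall k, (k <= J)%nat -> tt k <= tt (S k)) /\
  forall (s : R) (k : nat), (E s k /\ 0 <= s <= T /\ (k <= J)%nat) <->
                            ((k <= J)%nat /\ tt k <= s <= tt (S k)).

Lemma time_domain_partition_exists E T J :
  hybrid_time_domain E -> E T J -> exists tt, time_domain_partition E T J tt.
Proof. intros [_ HE] HT. exact (HE T J HT). Qed.

Lemma time_domain_partition_last E T J tt : hybrid_time_domain E -> E T J ->
  time_domain_partition E T J tt -> tt (S J) = T.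
Proof.
intros [Hnn _] HT [_ [Hm Hsp]].
destruct (proj1 (Hsp T J) (conj HT (conj (conj (Hnn _ _ HT) (Rle_refl _)) (Nat.le_refl _))))
  as [_ h1].
destruct (proj2 (Hsp (tt (S J)) J) (conj (Nat.le_refl _) (conj (Hm J (Nat.le_refl _)) (Rle_refl _))))
  as [_ [h2 _]].
lra.
Qed.

Lemma time_domain_interval E a b s j : hybrid_time_domain E ->
  E a j -> E b j -> a <= s <= b -> E s j.
Proof.
intros HE Ha Hb Hs. destruct (time_domain_partition_exists E b j HE Hb) as [tt Htt].
pose proof HE as [Hnn _]. destruct Htt as [_ [_ Hsp]].
destruct (proj1 (Hsp a j) (conj Ha (conj (conj (Hnn _ _ Ha) (Rle_trans _ _ _ (proj1 Hs) (proj2 Hs))) (Nat.le_refl _))))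
  as [_ h1].
destruct (proj1 (Hsp b j) (conj Hb (conj (conj (Hnn _ _ Hb) (Rle_refl _)) (Nat.le_refl _))))
  as [_ h2].
apply (Hsp s j). split; [lia|lra].
Qed.

Lemma time_domain_jump_le E s t j : hybrid_time_domain E ->
  E s j -> E s (S j) -> E t (S j) -> s <= t.
Proof.
intros HE Hs HsS HtS. destruct (Rle_lt_dec s t) as [|Hts]; [assumption|].
destruct (time_domain_partition_exists E s (S j) HE HsS) as [tt [_ [_ Hsp]]].
pose proof HE as [Hnn _].
destruct (proj1 (Hsp s j) (conj Hs (conj (conj (Hnn _ _ Hs) (Rle_refl _)) (Nat.le_succ_diag_r j))))
  as [_ h1].
destruct (proj1 (Hsp t (S j)) (conj HtS (conj (conj (Hnn _ _ HtS) (Rlt_le _ _ Hts)) (Nat.le_refl _))))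
  as [_ h2].
lra.
Qed.

Lemma time_domain_pred E s k : hybrid_time_domain E ->
  E s (S k) -> exists s', 0 <= s' <= s /\ E s' k.
Proof.
intros HE Hs. destruct (time_domain_partition_exists E s (S k) HE Hs) as [tt [_ [Hm Hsp]]].
exists (tt (S k)).
enough (E (tt (S k)) k /\ 0 <= tt (S k) <= s /\ (k <= S k)%nat) by tauto.
apply (Hsp (tt (S k)) k). split; [lia|]. pose proof (Hm k ltac:(lia)). lra.
Qed.

(* Both partitions of [[0, T] x {0..J}] have the same switching times. *)
Lemma time_domain_incl_below E1 E2 T J s k :
  hybrid_time_domain E1 -> hybrid_time_domain E2 -> (forall t j, E1 t j -> E2 t j) ->
  E1 T J -> E2 s k -> 0 <= s <= T -> (k <= J)%nat -> E1 s k.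
Proof.
intros H1 H2 Hsub HT Hs Hst Hk.
destruct (time_domain_partition_exists E1 T J H1 HT) as [tt Htt].
destruct (time_domain_partition_exists E2 T J H2 (Hsub _ _ HT)) as [tt' Htt'].
pose proof (time_domain_partition_last _ _ _ _ H1 HT Htt) as Hend.
pose proof (time_domain_partition_last _ _ _ _ H2 (Hsub _ _ HT) Htt') as Hend'.
destruct Htt as [H0 [Hm Hsp]], Htt' as [H0' [Hm' Hsp']].
assert (Heq : forall l, (l <= S J)%nat -> tt l = tt' l).
{ intros [|l] Hl; [lra|].
  destruct (Nat.eq_dec l J) as [->|Hne]; [lra|].
  assert (HlJ : (S l <= J)%nat) by lia.
  destruct (proj2 (Hsp (tt (S l)) (S l)) (conj HlJ (conj (Rle_refl _) (Hm _ HlJ))))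
    as [A1 [A1r _]].
  destruct (proj2 (Hsp (tt (S l)) l) (conj (Nat.lt_le_incl _ _ HlJ) (conj (Hm l (Nat.lt_le_incl _ _ HlJ)) (Rle_refl _))))
    as [A2 [A2r _]].
  destruct (proj1 (Hsp' (tt (S l)) (S l)) (conj (Hsub _ _ A1) (conj A1r HlJ))) as [_ B1].
  destruct (proj1 (Hsp' (tt (S l)) l) (conj (Hsub _ _ A2) (conj A2r (Nat.lt_le_incl _ _ HlJ)))) as [_ B2].
  lra. }
apply (proj2 (Hsp s k)). rewrite (Heq k), (Heq (S k)) by lia.
exact (proj1 (Hsp' s k) (conj Hs (conj Hst Hk))).
Qed.

Lemma time_domain_jumps_only m : hybrid_time_domain (fun t j => t = 0 /\ (j <= m)%nat).
Proof.
split; [intros t j [-> _]; lra|].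
intros T J [-> HJ]. exists (fun _ => 0). split; [reflexivity|split; [intros; lra|]].
intros s k. split.
- intros [[-> _] [_ Hk]]. split; [auto|lra].
- intros [Hk Hs]. assert (s = 0) by lra. subst. repeat split; lra || lia.
Qed.

Lemma time_domain_flow_only c : hybrid_time_domain (fun t j => j = 0%nat /\ 0 <= t <= c).
Proof.
split; [intros t j [_ ?]; lra|].
intros T J [-> HT]. exists (fun k => match k with O => 0 | S _ => T end).
split; [reflexivity|split].
- intros k Hk. assert (k = 0%nat) by lia. subst. lra.
- intros s k. split.
  + intros [[-> Hs] [Hs' _]]. auto.
  + intros [Hk Hs]. assert (k = 0%nat) by lia. subst. simpl in Hs. repeat split; lra || lia.
Qed.

Lemma interior_mem (P : R -> Prop) t : interior P t -> P t.
Proof. intros [e [He HP]]. apply HP. rewrite Rminus_diag, Rabs_R0. exact He. Qed.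

Lemma interior_subset (P Q : R -> Prop) t :
  (forall x, P x -> Q x) -> interior P t -> interior Q t.
Proof. intros HPQ [e [He HP]]. exists e. auto. Qed.

Lemma interior_open_interval (P : R -> Prop) a b s :
  (forall x, a < x < b -> P x) -> a < s < b -> interior P s.
Proof.
intros HP Hs. exists (Rmin (s - a) (b - s)). split; [apply Rmin_pos; lra|].
intros x Hx. apply HP. pose proof (Rmin_l (s - a) (b - s)). pose proof (Rmin_r (s - a) (b - s)).
destruct (Rabs_def2 _ _ Hx). lra.
Qed.

Lemma interior_closed_interval_bounds (P : R -> Prop) a b s :
  interior (fun x => P x /\ a <= x <= b) s -> a < s < b.
Proof.
intros [e [He HP]].
destruct (HP (s - e / 2)) as [_ H1]; [rewrite Rabs_left; lra|].
destruct (HP (s + e / 2)) as [_ H2]; [rewrite Rabs_right; lra|].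
lra.
Qed.

(* Without interior points, every [I^j] is a single point, so all times are [0]. *)
Lemma time_domain_discrete E : hybrid_time_domain E ->
  (forall k t, ~ interior (fun s => E s k) t) -> forall s k, E s k -> s = 0.
Proof.
intros HE Hni s k Hs. destruct (time_domain_partition_exists E s k HE Hs) as [tt Htt].
rewrite <- (time_domain_partition_last _ _ _ _ HE Hs Htt).
destruct Htt as [H0 [Hm Hsp]].
enough (forall l, (l <= S k)%nat -> tt l = 0) by auto.
induction l as [|l IH]; intros Hl; auto.
specialize (IH ltac:(lia)). specialize (Hm l ltac:(lia)).
destruct (Req_dec (tt (S l)) (tt l)) as [|Hne]; [lra|].
exfalso. apply (Hni l ((tt l + tt (S l)) / 2)).
apply (interior_open_interval _ (tt l) (tt (S l))); [|lra].
intros x Hx. apply (proj2 (Hsp x l)). split; [lia|lra].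
Qed.

Lemma time_domain_discrete_down E : hybrid_time_domain E ->
  (forall s k, E s k -> s = 0) -> forall k k', E 0 k -> (k' <= k)%nat -> E 0 k'.
Proof.
intros HE Hz k. induction k as [|k IH]; intros k' Hk Hle.
- replace k' with 0%nat by lia. exact Hk.
- destruct (Nat.eq_dec k' (S k)) as [->|]; [exact Hk|].
  apply IH; [|lia].
  destruct (time_domain_pred E 0 k HE Hk) as [s' [Hs' HE']].
  replace s' with 0 in HE' by lra. exact HE'.
Qed.

Lemma abs_continuous_on_ext f g a b : abs_continuous_on f a b ->
  (forall s, a <= s <= b -> g s = f s) -> abs_continuous_on g a b.
Proof.
intros Hf Hfg eps He. destruct (Hf eps He) as [d [Hd Hf']]. exists d. split; auto.
intros m aa bb H1 H2 H3. rewrite (fsum_ext _ (fun k => Rabs (f (bb k) - f (aa k)))).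
- apply Hf'; auto.
- intros k Hk. specialize (H1 k Hk). rewrite !Hfg by lra. reflexivity.
Qed.

Lemma abs_continuous_on_point f a : abs_continuous_on f a a.
Proof.
intros eps He. exists 1. split; [lra|]. intros m aa bb H1 _ _.
rewrite (fsum_ext _ (fun _ => 0)), fsum_const0; [exact He|].
intros k Hk. specialize (H1 k Hk). replace (bb k) with (aa k) by lra.
rewrite Rminus_diag, Rabs_R0. reflexivity.
Qed.

Lemma abs_continuous_on_shift f c a b : abs_continuous_on f (c + a) (c + b) ->
  abs_continuous_on (fun s => f (c + s)) a b.
Proof.
intros Hf eps He. destruct (Hf eps He) as [d [Hd Hf']]. exists d. split; auto.
intros m aa bb H1 H2 H3.
apply (Hf' m (fun k => c + aa k) (fun k => c + bb k)).
- intros k Hk. specialize (H1 k Hk). lra.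
- intros k l Hk Hl. specialize (H2 k l Hk Hl). lra.
- rewrite (fsum_ext _ (fun k => bb k - aa k)) by (intros; lra). exact H3.
Qed.

Lemma derivable_pt_lim_local f g t l : derivable_pt_lim f t l ->
  (exists e, 0 < e /\ forall s, Rabs (s - t) < e -> g s = f s) -> derivable_pt_lim g t l.
Proof.
intros Hf [e [He Hg]] eps Heps. destruct (Hf eps Heps) as [d Hd].
assert (Hm : 0 < Rmin d e) by (apply Rmin_pos; [apply cond_pos|auto]).
exists (mkposreal _ Hm). intros h Hh Hh'. simpl in Hh'.
rewrite !Hg.
- apply Hd; auto. apply Rlt_le_trans with (1 := Hh'); apply Rmin_l.
- rewrite Rminus_diag, Rabs_R0. exact He.
- replace (t + h - t) with h by ring. apply Rlt_le_trans with (1 := Hh'); apply Rmin_r.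
Qed.

Lemma derivable_pt_lim_shift f c t l : derivable_pt_lim f (c + t) l ->
  derivable_pt_lim (fun s => f (c + s)) t l.
Proof.
intros Hf eps Heps. destruct (Hf eps Heps) as [d Hd]. exists d. intros h Hh Hh'.
rewrite <- Rplus_assoc. apply Hd; auto.
Qed.

Lemma closure_subset {n} (A : Vec n -> Prop) x : A x -> closure A x.
Proof.
intros Hx eps He. exists x. split; [exact Hx|].
intro i. rewrite Rminus_diag, Rabs_R0. exact He.
Qed.

Lemma cofinal_sequence (I : R -> Prop) : (exists x, I x) ->
  exists u : nat -> R, (forall m, I (u m)) /\ forall t, I t -> exists m, t <= u m.
Proof.
intros Hne. destruct (classic (bound I)) as [Hb|Hnb].
- destruct (completeness I Hb Hne) as [b [Hub Hlub]].
  destruct (classic (I b)) as [Ib|nIb].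
  { exists (fun _ => b). split; auto. intros t It. exists 0%nat. apply Hub, It. }
  assert (Hex : forall m : nat, exists x, I x /\ b - / (INR m + 1) < x).
  { intro m. apply NNPP. intro Hn.
    assert (Hpos : 0 < / (INR m + 1)) by (apply Rinv_0_lt_compat; pose proof (pos_INR m); lra).
    enough (b <= b - / (INR m + 1)) by lra.
    apply Hlub. intros x Ix. apply Rnot_lt_le. intro h. apply Hn. exists x; auto. }
  destruct (choice _ Hex) as [u Hu]. exists u. split; [apply Hu|].
  intros t It. assert (t <= b) by (apply Hub, It).
  assert (Htb : t <> b) by (intros ->; tauto).
  destruct (INR_unbounded (/ (b - t))) as [m Hm]. exists m.
  assert (/ (INR m + 1) < b - t).
  { rewrite <- (Rinv_inv (b - t)). apply Rinv_lt_contravar; [|lra].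
    assert (0 < / (b - t)) by (apply Rinv_0_lt_compat; lra). nra. }
  pose proof (proj2 (Hu m)). lra.
- assert (Hex : forall m : nat, exists x, I x /\ INR m <= x).
  { intro m. apply NNPP. intro Hn. apply Hnb. exists (INR m). intros x Ix.
    apply Rnot_lt_le. intro h. apply Hn. exists x. split; auto; lra. }
  destruct (choice _ Hex) as [u Hu]. exists u. split; [apply Hu|].
  intros t It. destruct (INR_unbounded t) as [m Hm]. exists m. pose proof (proj2 (Hu m)). lra.
Qed.

Lemma zorn_preorder (T : Type) (t0 : T) (R : T -> T -> Prop) :
  (forall t, R t t) -> (forall r s t, R r s -> R s t -> R r t) ->
  (forall A : T -> Prop, (forall s t, A s -> A t -> R s t \/ R t s) ->
     exists t, forall s, A s -> R s t) ->
  exists t, forall s, R t s -> R s t.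
Proof.
intros Hrefl Htrans Hchain.
assert (Hasbool : forall a b, boolp.asbool (R a b) = true <-> R a b)
  by (intros a b; split; [apply boolp.asboolW|intro; apply boolp.asboolT; assumption]).
destruct (@classical_sets.ZL_preorder T t0 (fun a b => boolp.asbool (R a b))) as [t Ht].
- intro t; apply Hasbool, Hrefl.
- intros r s t Hrs Hst; apply Hasbool; apply Hasbool in Hrs; apply Hasbool in Hst; eauto.
- intros A HA. destruct (Hchain A) as [t Hub].
  + intros s t As At. destruct (HA s t As At); [left|right]; apply Hasbool; assumption.
  + exists t. intros s As. apply Hasbool, Hub, As.
- exists t. intros s Hts. apply Hasbool, Ht, Hasbool, Hts.
Qed.

Section Solutions.
Variable n : nat.
Variable H : HybridSystem n.

Lemma jumps_only_solution m (phi : R -> nat -> Vec n) :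
  (closure (hs_C H) (phi 0 0%nat) \/ hs_D H (phi 0 0%nat)) ->
  (forall k, (k < m)%nat -> hs_D H (phi 0 k) /\ hs_G H (phi 0 k) (phi 0 (S k))) ->
  is_solution H (fun t j => t = 0 /\ (j <= m)%nat) phi.
Proof.
intros Hinit Hjump. split; [split|split; [|split; [|split]]].
- apply time_domain_jumps_only.
- intros j a b Hab HI i.
  destruct (HI a ltac:(lra)) as [-> _], (HI b ltac:(lra)) as [-> _].
  apply abs_continuous_on_point.
- split; [reflexivity|lia].
- exact Hinit.
- intros j [s0 Hint]. exfalso.
  destruct Hint as [e' [He' Hball]].
  destruct (Hball s0) as [h1 _]; [rewrite Rminus_diag, Rabs_R0; lra|].
  destruct (Hball (s0 + e' / 2)) as [h2 _]; [rewrite Rabs_right; lra|].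
  lra.
- intros s k [-> Hk1] [_ Hk2]. apply Hjump. lia.
Qed.

Lemma flow_piece_solution E phi k t0 e : is_solution H E phi -> 0 < e ->
  (forall s, Rabs (s - t0) < e -> E s k) ->
  is_solution H (fun s j => j = 0%nat /\ 0 <= s <= e / 2) (fun s _ => phi (t0 + s) k).
Proof.
intros [[HE Hac] [_ [_ [Hflow _]]]] He Hball.
assert (Hint : forall s, t0 - e < s < t0 + e -> interior (fun x => E x k) s).
{ intros s Hs. apply (interior_open_interval _ (t0 - e) (t0 + e)); [|exact Hs].
  intros x Hx. apply Hball. apply Rabs_def1; lra. }
destruct (Hflow k (ex_intro _ t0 (Hint t0 ltac:(lra)))) as [HC [N [HN Hder]]].
assert (Hin : forall s, 0 <= s <= e / 2 -> E (t0 + s) k).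
{ intros s Hs. apply Hball. replace (t0 + s - t0) with s by ring. rewrite Rabs_right; lra. }
split; [split|split; [|split; [|split]]].
- apply time_domain_flow_only.
- intros j a b Hab HI i.
  destruct (HI a ltac:(lra)) as [_ Ha], (HI b ltac:(lra)) as [_ Hb].
  apply (abs_continuous_on_shift (fun s => phi s k i)). apply Hac; [lra|].
  intros s Hs. replace s with (t0 + (s - t0)) by ring. apply Hin. lra.
- split; [reflexivity|lra].
- left. apply closure_subset, HC. rewrite Rplus_0_r. apply Hint. lra.
- intros j _. split.
  + intros s Hs. apply interior_closed_interval_bounds in Hs. apply HC, Hint. lra.
  + exists (fun s => (N (t0 + s) \/ s = 0) \/ s = e / 2). split.
    { apply null_set_add_point, null_set_add_point, null_set_shift, HN. }
    intros s [-> Hs] HnN.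
    assert (Hs' : 0 < s < e / 2)
      by (destruct (Req_dec s 0), (Req_dec s (e / 2)); [tauto|tauto|tauto|lra]).
    split.
    * apply (interior_open_interval _ 0 (e / 2)); [|exact Hs']. intros; split; [auto|lra].
    * destruct (Hder (t0 + s) (Hin s ltac:(lra)) ltac:(tauto)) as [_ [v [Hv Hd]]].
      exists v. split; [exact Hv|]. intro i. apply (derivable_pt_lim_shift (fun x => phi x k i)); apply Hd.
- intros s j [-> _] [Habs _]. discriminate.
Qed.

Definition flows_at (E : R -> nat -> Prop) (phi : R -> nat -> Vec n) j t : Prop :=
  interior (fun s => E s j) t /\
  exists v, hs_F H (phi t j) v /\ forall i, derivable_pt_lim (fun s => phi s j i) t (v i).

Definition arc := ((R -> nat -> Prop) * (R -> nat -> Vec n))%type.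

Definition extends (a b : arc) : Prop :=
  (forall t j, fst a t j -> fst b t j) /\ (forall t j, fst a t j -> snd b t j = snd a t j).

Lemma extends_refl a : extends a a.
Proof. split; auto. Qed.

Lemma extends_trans a b c : extends a b -> extends b c -> extends a c.
Proof. intros [Hab Hab'] [Hbc Hbc']. split; auto. intros t j h. rewrite Hbc'; auto. Qed.

Lemma flows_at_extends E phi E' phi' j t :
  extends (E, phi) (E', phi') -> flows_at E phi j t -> flows_at E' phi' j t.
Proof.
intros [Hsub Hag] [Hint [v [Hv Hd]]]. simpl in Hsub, Hag.
split; [exact (interior_subset _ _ t (fun s => Hsub s j) Hint)|].
exists v. rewrite Hag by exact (interior_mem _ _ Hint). split; [exact Hv|].
intro i. apply (derivable_pt_lim_local (fun s => phi s j i)); [apply Hd|].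
destruct Hint as [e [He Hball]]. exists e. split; [exact He|]. intros s Hs. rewrite Hag; auto.
Qed.

(* When [I^j] has no interior it is at most a single point. *)
Lemma solution_nonflow_null E phi j :
  is_solution H E phi -> null_set (fun t => E t j /\ ~ flows_at E phi j t).
Proof.
intros [[HE _] [_ [_ [Hflow _]]]].
destruct (classic (exists t, interior (fun s => E s j) t)) as [Hint|Hnint].
- destruct (Hflow j Hint) as [_ [N [HN Hder]]].
  apply (null_set_subset N); [|exact HN]. intros t [Ht Hnf]. apply NNPP. intro Hn.
  apply Hnf, Hder; assumption.
- destruct (classic (exists a, E a j)) as [[a Ha]|Hna].
  + apply (null_set_subset (fun x => False \/ x = a)); [|apply null_set_add_point, null_set0].
    intros t [Ht _]. right. apply NNPP. intro Hne. apply Hnint.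
    exists ((t + a) / 2). destruct (Rlt_dec t a).
    * apply (interior_open_interval _ t a); [|lra].
      intros x Hx. apply (time_domain_interval _ t a); auto; lra.
    * apply (interior_open_interval _ a t); [|lra].
      intros x Hx. apply (time_domain_interval _ a t); auto; lra.
  + apply (null_set_subset (fun _ => False)); [|apply null_set0].
    intros t [Ht _]. apply Hna. eauto.
Qed.

Section Chain.
Variable A : arc -> Prop.
Variable r0 : arc.
Hypothesis A_r0 : A r0.
Hypothesis A_solution : forall r, A r -> is_solution H (fst r) (snd r).
Hypothesis A_chain : forall r1 r2, A r1 -> A r2 -> extends r1 r2 \/ extends r2 r1.

Definition chain_domain t j : Prop := exists r, A r /\ fst r t j.

Definition chain_arc t j : Vec n :=
  match excluded_middle_informative (chain_domain t j) with
  | left h => snd (proj1_sig (constructive_indefinite_description _ h)) t j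
  | right _ => snd r0 t j
  end.

Lemma chain_arc_agrees r t j : A r -> fst r t j -> chain_arc t j = snd r t j.
Proof.
intros Hr Ht. unfold chain_arc.
destruct (excluded_middle_informative (chain_domain t j)) as [h|h].
- destruct (constructive_indefinite_description _ h) as [r' [Hr' Ht']]. simpl.
  destruct (A_chain r r' Hr Hr') as [[_ e]|[_ e]]; auto. symmetry; auto.
- exfalso. apply h. exists r; auto.
Qed.

Lemma chain_extends r : A r -> extends r (chain_domain, chain_arc).
Proof.
intros Hr. split; simpl.
- intros t j h. exists r; auto.
- intros t j h. apply chain_arc_agrees; auto.
Qed.

Lemma chain_upper r1 r2 : A r1 -> A r2 -> exists r, A r /\ extends r1 r /\ extends r2 r.
Proof.
intros H1 H2. destruct (A_chain r1 r2 H1 H2).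
- exists r2. auto using extends_refl.
- exists r1. auto using extends_refl.
Qed.

Lemma chain_time_domain : hybrid_time_domain chain_domain.
Proof.
split.
- intros t j [r [Hr Ht]]. exact (proj1 (proj1 (proj1 (A_solution r Hr))) _ _ Ht).
- intros T J [r [Hr HT]].
  pose proof (proj1 (proj1 (A_solution r Hr))) as HEr.
  destruct (time_domain_partition_exists _ T J HEr HT) as [tt [h0 [hm hsp]]].
  exists tt. split; [exact h0|split; [exact hm|]].
  intros s k. rewrite <- hsp. split.
  + intros [[r' [Hr' Hs]] Hb]. split; [|exact Hb].
    destruct (A_chain r' r Hr' Hr) as [[e1 _]|[e1 _]]; [auto|].
    apply (time_domain_incl_below (fst r) (fst r') T J); try tauto.
    exact (proj1 (proj1 (A_solution r' Hr'))).
  + intros [Hs Hb]. split; [exists r; auto|exact Hb].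
Qed.

(* The nonflow set of the union lies in a countable union of nonflow sets of
   members, indexed along a cofinal sequence of times. *)
Lemma chain_nonflow_null j : (exists t, chain_domain t j) ->
  null_set (fun t => chain_domain t j /\ ~ flows_at chain_domain chain_arc j t).
Proof.
intros Hne. destruct (cofinal_sequence (fun t => chain_domain t j) Hne) as [u [Hu Hcof]].
destruct (choice _ Hu) as [rm Hrm].
apply (null_set_subset (fun t => exists m, fst (rm m) t j /\ ~ flows_at (fst (rm m)) (snd (rm m)) j t)).
2:{ apply null_set_countable_union. intro m. apply solution_nonflow_null, A_solution, Hrm. }
intros t [[r [Hr Ht]] Hnf]. destruct (Hcof t (ex_intro _ r (conj Hr Ht))) as [m Hm].
destruct (Hrm m) as [Hrmm Hum]. exists m.
assert (Htm : fst (rm m) t j).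
{ destruct (A_chain r (rm m) Hr Hrmm) as [[e1 _]|[e1 _]]; auto.
  apply (time_domain_incl_below (fst (rm m)) (fst r) (u m) j); auto.
  - apply A_solution, Hrmm.
  - apply A_solution, Hr.
  - split; [|exact Hm]. exact (proj1 (proj1 (proj1 (A_solution r Hr))) _ _ Ht). }
split; [exact Htm|]. intro Hf. apply Hnf.
apply (flows_at_extends (fst (rm m)) (snd (rm m))); [|exact Hf].
rewrite <- surjective_pairing. apply chain_extends, Hrmm.
Qed.

Lemma chain_solution : is_solution H chain_domain chain_arc.
Proof.
pose proof (A_solution r0 A_r0) as [_ [H00 [Hinit _]]].
split; [split|split; [|split; [|split]]].
- exact chain_time_domain.
- intros j a b Hab HI i.
  destruct (HI a ltac:(lra)) as [r1 [H1 Ha]], (HI b ltac:(lra)) as [r2 [H2 Hb]].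
  destruct (chain_upper r1 r2 H1 H2) as [r [Hr [[e1 _] [e2 _]]]].
  destruct (A_solution r Hr) as [[HEr Hac] _].
  apply (abs_continuous_on_ext (fun s => snd r s j i)).
  + apply Hac; [exact Hab|]. intros s Hs. apply (time_domain_interval _ a b); auto.
  + intros s Hs. rewrite (chain_arc_agrees r); [reflexivity|exact Hr|].
    apply (time_domain_interval _ a b); auto.
- exists r0. auto.
- rewrite (chain_arc_agrees r0) by auto. exact Hinit.
- intros j [t0 Ht0]. split.
  + intros t [e [He Hball]].
    destruct (Hball (t - e / 2)) as [r1 [H1 Ha]]; [rewrite Rabs_left; lra|].
    destruct (Hball (t + e / 2)) as [r2 [H2 Hb]]; [rewrite Rabs_right; lra|].
    destruct (chain_upper r1 r2 H1 H2) as [r [Hr [[e1 _] [e2 _]]]].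
    destruct (A_solution r Hr) as [[HEr _] [_ [_ [Hflow _]]]].
    assert (Hin : interior (fun s => fst r s j) t).
    { apply (interior_open_interval _ (t - e / 2) (t + e / 2)); [|lra].
      intros x Hx. apply (time_domain_interval _ (t - e / 2) (t + e / 2)); auto; lra. }
    rewrite (chain_arc_agrees r t j Hr (interior_mem _ _ Hin)).
    apply (Hflow j (ex_intro _ t Hin)), Hin.
  + exists (fun t => chain_domain t j /\ ~ flows_at chain_domain chain_arc j t).
    split; [apply chain_nonflow_null; exists t0; exact (interior_mem _ _ Ht0)|].
    intros t Ht Hnf. apply NNPP. intro Hn. apply Hnf. split; [exact Ht|exact Hn].
- intros t j [r1 [H1 h1]] [r2 [H2 h2]].
  destruct (chain_upper r1 r2 H1 H2) as [r [Hr [[e1 _] [e2 _]]]].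
  destruct (A_solution r Hr) as [_ [_ [_ [_ Hjump]]]].
  rewrite !(chain_arc_agrees r) by auto. auto.
Qed.

End Chain.

Lemma maximal_extension_exists E0 phi0 : is_solution H E0 phi0 ->
  exists E phi, maximal_solution H E phi /\ extends (E0, phi0) (E, phi).
Proof.
intro Hs0. set (r0 := (E0, phi0) : arc).
set (T := {r : arc | is_solution H (fst r) (snd r) /\ extends r0 r}).
set (t0 := exist _ r0 (conj Hs0 (extends_refl r0)) : T).
destruct (zorn_preorder T t0 (fun a b => extends (proj1_sig a) (proj1_sig b))) as [[[E phi] [HS H0]] Hmax].
- intro; apply extends_refl.
- intros a b c; apply extends_trans.
- intros A HA.
  set (A' := fun r => r = r0 \/ exists a, A a /\ proj1_sig a = r).
  assert (HA'sol : forall r, A' r -> is_solution H (fst r) (snd r))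
    by (intros r [->|[a [_ <-]]]; [exact Hs0|apply (proj2_sig a)]).
  assert (HA'chain : forall r1 r2, A' r1 -> A' r2 -> extends r1 r2 \/ extends r2 r1).
  { intros r1 r2 [->|[a [Ha <-]]] [->|[b [Hb <-]]].
    - left; apply extends_refl.
    - left; apply (proj2_sig b).
    - right; apply (proj2_sig a).
    - apply HA; auto. }
  assert (Hr0 : A' r0) by (left; reflexivity).
  set (U := (chain_domain A', chain_arc A' r0)).
  exists (exist _ U (conj (chain_solution A' r0 Hr0 HA'sol HA'chain)
                          (chain_extends A' r0 HA'chain r0 Hr0)) : T).
  intros s Hs. apply chain_extends; [exact HA'chain|]. right. exists s; auto.
- exists E, phi. split; [split; [exact HS|]|exact H0].
  intros [E' [phi' [HS' [Hsub [[t [j [Ht Hnt]]] Hag]]]]].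
  assert (He : extends (E, phi) (E', phi')) by (split; simpl; auto).
  destruct (Hmax (exist _ (E', phi') (conj HS' (extends_trans _ _ _ H0 He)) : T) He) as [h _].
  apply Hnt, h, Ht.
Qed.

End Solutions.

Section Necessity.
Variable n : nat.
Variable H : HybridSystem n.
Variable p : Vec n -> bool.
Hypothesis always_next : forall (E : R -> nat -> Prop) (phi : R -> nat -> Vec n),
  maximal_solution H E phi -> forall t j, E t j -> sat_next p E phi t j.

Lemma solution_jump_set E phi t j : is_solution H E phi -> E t j -> hs_D H (phi t j).
Proof.
intros Hs Ht.
destruct (maximal_extension_exists n H E phi Hs) as [E' [phi' [Hm [Hsub Hag]]]].
simpl in Hsub, Hag.
destruct (always_next E' phi' Hm t j (Hsub _ _ Ht)) as [HtS _].
destruct Hm as [[_ [_ [_ [_ Hjump]]]] _].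
rewrite <- (Hag t j Ht). exact (proj1 (Hjump t j (Hsub _ _ Ht) HtS)).
Qed.

Lemma solution_jump_sat E phi t j : is_solution H E phi -> E t j -> E t (S j) ->
  p (phi t (S j)) = true.
Proof.
intros Hs Ht HtS.
destruct (maximal_extension_exists n H E phi Hs) as [E' [phi' [Hm [Hsub Hag]]]].
simpl in Hsub, Hag.
destruct (always_next E' phi' Hm t j (Hsub _ _ Ht)) as [_ Hp].
rewrite <- (Hag t (S j) HtS). exact Hp.
Qed.

(* A maximal extension would jump both at time [0] and at time [eps / 2]
   from the first flow interval. *)
Lemma solution_no_flow E phi eps : is_solution H E phi -> 0 < eps ->
  ~ (forall t, 0 <= t < eps -> E t 0%nat).
Proof.
intros Hs Heps Hflow.
destruct (maximal_extension_exists n H E phi Hs) as [E' [phi' [Hm [Hsub _]]]].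
simpl in Hsub.
assert (H0 : E' 0 0%nat) by (apply Hsub, Hs).
assert (Hh : E' (eps / 2) 0%nat) by (apply Hsub, Hflow; lra).
destruct (always_next E' phi' Hm 0 0%nat H0) as [H01 _].
destruct (always_next E' phi' Hm (eps / 2) 0%nat Hh) as [Hh1 _].
destruct Hm as [[[HE _] _] _].
pose proof (time_domain_jump_le E' (eps / 2) 0 0%nat HE Hh Hh1 H01). lra.
Qed.

Lemma jump_map_lands_in_jump_set x y : hs_D H x -> hs_G H x y -> p y = true /\ hs_D H y.
Proof.
intros Hx Hy.
set (phi := fun (_ : R) (j : nat) => match j with O => x | _ => y end).
assert (Hs : is_solution H (fun t j => t = 0 /\ (j <= 1)%nat) phi).
{ apply jumps_only_solution; [right; exact Hx|].
  intros k Hk. replace k with 0%nat by lia. split; assumption. }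
split.
- exact (solution_jump_sat _ phi 0 0%nat Hs (conj eq_refl (le_0_n 1)) (conj eq_refl (le_n 1))).
- exact (solution_jump_set _ phi 0 1%nat Hs (conj eq_refl (le_n 1))).
Qed.

Lemma closure_flow_set_in_jump_set x : closure (hs_C H) x -> hs_D H x.
Proof.
intro Hx.
assert (Hs : is_solution H (fun t j => t = 0 /\ (j <= 0)%nat) (fun _ _ => x))
  by (apply jumps_only_solution; [left; exact Hx|intros; lia]).
exact (solution_jump_set _ _ 0 0%nat Hs (conj eq_refl (le_n 0))).
Qed.

End Necessity.

Section Sufficiency.
Variable n : nat.
Variable H : HybridSystem n.
Variable p : Vec n -> bool.
Hypothesis jump_set_in_dom : forall x, hs_D H x -> exists y, hs_G H x y.
Hypothesis no_flow_from_C : forall (E : R -> nat -> Prop) (phi : R -> nat -> Vec n) (eps : R),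
  is_solution H E phi -> 0 < eps -> hs_C H (phi 0 0%nat) ->
  ~ (forall t, 0 <= t < eps -> E t 0%nat).
Hypothesis jump_map_in_K : forall x y, hs_D H x -> hs_G H x y ->
  (hs_X H y /\ p y = true) /\ hs_D H y.
Hypothesis closure_C_in_D : forall x, closure (hs_C H) x -> hs_D H x.

Lemma solution_no_interior E phi : is_solution H E phi ->
  forall k t, ~ interior (fun s => E s k) t.
Proof.
intros Hs k t0 [e [He Hball]].
pose proof (flow_piece_solution n H E phi k t0 e Hs He Hball) as Hpiece.
apply (no_flow_from_C _ _ (e / 2) Hpiece); [lra| |intros t Ht; split; [reflexivity|lra]].
destruct Hs as [_ [_ [_ [Hflow _]]]].
assert (Hint : interior (fun s => E s k) t0) by (exists e; auto).
rewrite Rplus_0_r. exact (proj1 (Hflow k (ex_intro _ t0 Hint)) t0 Hint).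
Qed.

Lemma solution_times_zero E phi : is_solution H E phi -> forall s k, E s k -> s = 0.
Proof.
intros Hs. apply time_domain_discrete; [apply Hs|]. exact (solution_no_interior E phi Hs).
Qed.

Lemma solution_jump_set_at_zero E phi : is_solution H E phi ->
  forall k, E 0 k -> hs_D H (phi 0 k).
Proof.
intros Hs k. pose proof Hs as [[HE _] [_ [Hinit [_ Hjump]]]].
induction k as [|k IH]; intros Hk.
- destruct Hinit as [Hinit|Hinit]; auto.
- assert (Hk' : E 0 k)
    by (apply (time_domain_discrete_down E HE (solution_times_zero E phi Hs) (S k)); auto).
  destruct (Hjump 0 k Hk' Hk) as [HD HG]. exact (proj2 (jump_map_in_K _ _ HD HG)).
Qed.

(* Otherwise the domain is [{0} x {0..j}] and one more jump extends the solution. *)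
Lemma maximal_solution_jumps E phi j : maximal_solution H E phi -> E 0 j -> E 0 (S j).
Proof.
intros [Hs Hmax] Hj. apply NNPP. intro Hnj.
pose proof Hs as [[HE _] [_ [Hinit [_ Hjump]]]].
pose proof (solution_times_zero E phi Hs) as Hz.
pose proof (time_domain_discrete_down E HE Hz) as Hdown.
assert (Hle : forall s k, E s k -> (k <= j)%nat).
{ intros s k Hk. pose proof (Hz _ _ Hk). subst s.
  destruct (Compare_dec.le_lt_dec k j); [assumption|].
  exfalso. apply Hnj, (Hdown k); auto. }
destruct (jump_set_in_dom _ (solution_jump_set_at_zero E phi Hs j Hj)) as [y Hy].
set (phi' := fun s k => if Nat.eq_dec k (S j) then y else phi s k).
apply Hmax. exists (fun s k => s = 0 /\ (k <= S j)%nat), phi'.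
split; [|split; [|split]].
- apply jumps_only_solution; [exact Hinit|].
  intros k Hk. unfold phi'.
  destruct (Nat.eq_dec k (S j)) as [|_]; [lia|].
  destruct (Nat.eq_dec (S k) (S j)) as [Hkj|Hkj].
  + injection Hkj as ->. split; [apply (solution_jump_set_at_zero E phi Hs); auto|exact Hy].
  + apply Hjump; apply (Hdown j); auto; lia.
- intros s k Hk. split; [exact (Hz _ _ Hk)|]. pose proof (Hle _ _ Hk). lia.
- exists 0, (S j). split; [split; [reflexivity|lia]|exact Hnj].
- intros s k Hk. unfold phi'. destruct (Nat.eq_dec k (S j)); [|reflexivity].
  pose proof (Hle _ _ Hk). lia.
Qed.

Lemma maximal_solution_next E phi t j : maximal_solution H E phi -> E t j ->
  sat_next p E phi t j.
Proof.
intros Hm Ht. pose proof (solution_times_zero E phi (proj1 Hm) t j Ht). subst t.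
pose proof (maximal_solution_jumps E phi j Hm Ht) as HS.
split; [exact HS|].
destruct Hm as [[_ [_ [_ [_ Hjump]]]] _].
destruct (Hjump 0 j Ht HS) as [HD HG]. exact (proj2 (proj1 (jump_map_in_K _ _ HD HG))).
Qed.

End Sufficiency.

Theorem proposition4 (n : nat) (H : HybridSystem n) (p : Vec n -> bool)
  (HSA : standing_assumptions H)
  (HK : exists x, hs_X H x /\ p x = true) :
  let K := fun x => hs_X H x /\ p x = true in
  (forall (E : R -> nat -> Prop) (phi : R -> nat -> Vec n),
     maximal_solution H E phi ->
     forall t j, E t j -> sat_next p E phi t j)
  <->
  ((* (a) *)
   (forall (E : R -> nat -> Prop) (phi : R -> nat -> Vec n),
      is_solution H E phi -> nontrivial E -> hs_D H (phi 0 0%nat)) /\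
   (* (b) *)
   (forall (E : R -> nat -> Prop) (phi : R -> nat -> Vec n) (eps : R),
      is_solution H E phi -> 0 < eps -> hs_C H (phi 0 0%nat) ->
      ~ (forall t, 0 <= t < eps -> E t 0%nat)) /\
   (* (c) *)
   (forall x y, hs_D H x -> hs_G H x y -> K y /\ hs_D H y) /\
   (* (d) *)
   (forall x, closure (hs_C H) x -> hs_D H x)).
Proof.
intros K. destruct HSA as [_ [HG [_ [HdomG _]]]]. split.
- intro Hnext. split; [|split; [|split]].
  + intros E phi Hs _. exact (solution_jump_set n H p Hnext E phi 0 0%nat Hs (proj1 (proj2 Hs))).
  + intros E phi eps Hs Heps _. exact (solution_no_flow n H p Hnext E phi eps Hs Heps).
  + intros x y Hx Hy.
    destruct (jump_map_lands_in_jump_set n H p Hnext x y Hx Hy) as [Hp HDy].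
    split; [split; [exact (proj2 (HG x y Hy))|exact Hp]|exact HDy].
  + exact (closure_flow_set_in_jump_set n H p Hnext).
- intros [_ [Hb [Hc Hd]]] E phi Hm t j Ht.
  exact (maximal_solution_next n H p HdomG Hb Hc Hd E phi t j Hm Ht).
Qed.
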